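(* Let $X$ be a topologically complete space and $\mathcal A$ a family of closed, locally finite, normal covers of $X$ satisfying conditions (I) and (II), and let $N_\infty=F_\infty$, $\pi:N_\infty\to X$ and $p:X\to N_\infty$ be as in the context. Then: (1) $\pi$ is a perfect map (continuous, closed, with compact fibers $\pi^{-1}(x)$); (2a) $\pi\circ p=\mathrm{id}_X$; (2b) there exists a homotopy $H:N_\infty\times[0,1]\to N_\infty$ with $H_0=\mathrm{id}_{N_\infty}$, $H_1=p\circ\pi$ and $\pi\circ H=\pi\circ\mathrm{proj}$, where $\mathrm{proj}:N_\infty\times[0,1]\to N_\infty$ is the projection. In particular each fiber of $\pi$ is contractible.
   Context: A topologically complete space is a Tychonoff space complete with respect to its finest uniformity. A closed, locally finite, normal cover $\alpha$ of $X$ is a locally finite cover by closed sets admitting a partition of unity $\{\phi_{\alpha,V}:V\in\alpha\}$ with $\mathrm{cl}(\phi_{\alpha,V}^{-1}((0,1]))\subset\mathrm{int}(V)$, $\sum_V\phi_{\alpha,V}=1$; fix such a partition of unity for each $\alpha\in\mathcal A$. $\mathrm{star}_\alpha(x)=\{V\in\alpha:x\in V\}$. Conditions: (I) for each open $U\subset X$ and $x\in U$ there is $\alpha\in\mathcal A$ with $\bigcup\mathrm{star}_\alpha(x)\subset U$; (II) if $f(\alpha)\in\alpha$ is chosen for each $\alpha\in\mathcal A$ and $\{f(\alpha)\}$ has the finite intersection property, then $\bigcap_\alpha f(\alpha)\neq\emptyset$. Construction: $\Lambda$ is the set of finite subsets of $\mathcal A$ directed by inclusion. For $\lambda\in\Lambda$,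 $N^{(0)}_\lambda$ is the set of functions $v$ on $\lambda$ with $v(\alpha)\in\alpha$ for all $\alpha\in\lambda$ and $\wedge v:=\bigcap_{\alpha\in\lambda}v(\alpha)\neq\emptyset$ (empty intersection meaning $X$). $F_\lambda$ is the simplicial complex (weak topology) with vertex set $N^{(0)}_\lambda$ in which $\{v_1,\dots,v_k\}$ spans a simplex iff $\wedge v_i\cap\wedge v_j\neq\emptyset$ for all $i,j$; $N_\lambda$ is its subcomplex with the same vertices in which $\{v_1,\dots,v_k\}$ spans a simplex iff $\bigcap_i\wedge v_i\neq\emptyset$. For $\lambda\subset\mu$, $\pi^\mu_\lambda$ is the simplicial map sending a vertex $v$ to $v|_\lambda$. $F_\infty=\varprojlim F_\lambda$ and $N_\infty=\varprojlim N_\lambda$ (they coincide), with projections $\pi_\lambda$ and $z(\lambda)=\pi_\lambda(z)$. For $a\in F_\lambda$, $\sigma_\lambda(a)$ is the unique simplex containing $a$ in its interior, and $\wedge a=\bigcap\{\wedge v:v\text{ a vertex of }\sigma_\lambda(a)\}$. For each $z\in N_\infty$ the set $\bigcap_\lambda\wedge z(\lambda)$ is a single point, and $\pi(z)$ is defined as that point. For $v\in N^{(0)}_\lambda$ let $\phi_v=\prod_{\alpha\in\lambda}\phi_{\alpha,v(\alpha)}$; $p_\lambda:X\to N_\lambda$ is the canonical map sending $x$ to the point with barycentric coordinates $(\phi_v(x))_{v\in N^{(0)}_\lambda}$. These satisfy $p_\lambda=\pi^\mu_\lambda\circ p_\mu$ for $\lambda\subset\mu$, and $p:X\to N_\infty$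 is the induced map with $\pi_\lambda\circ p=p_\lambda$. *)

From HB Require Import structures.
From mathcomp Require Import all_boot all_order all_algebra.
From mathcomp Require Import all_classical all_reals all_analysis.
Set Implicit Arguments. Unset Strict Implicit. Unset Printing Implicit Defensive.
Import Order.TTheory GRing.Theory Num.Theory numFieldNormedType.Exports.
Local Open Scope classical_set_scope.
Local Open Scope ring_scope.

(* A "space" is a carrier set S : set T together with a family o of open subsets of S. *)

Definition rcont {T1 T2 : Type} (S1 : set T1) (o1 : set (set T1))
  (S2 : set T2) (o2 : set (set T2)) (f : T1 -> T2) : Prop :=
  (forall x, S1 x -> S2 (f x)) /\ (forall U, o2 U -> o1 (S1 `&` f @^-1` U)).

Definition rclosed {T : Type} (S : set T) (o : set (set T)) (C : set T) : Prop :=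
  C `<=` S /\ o (S `\` C).

Definition rcompact {T : Type} (o : set (set T)) (K : set T) : Prop :=
  forall C : set (set T), C `<=` o -> K `<=` \bigcup_(U in C) U ->
  exists2 D : set (set T), finite_set D /\ D `<=` C & K `<=` \bigcup_(U in D) U.

Definition sub_open {T : Type} (S' : set T) (o : set (set T)) : set (set T) :=
  [set W | exists2 U, o U & W = S' `&` U].

Definition prod_open {T1 T2 : Type} (o1 : set (set T1)) (o2 : set (set T2))
  : set (set (T1 * T2)) :=
  [set W | forall q, W q -> exists U, exists V,
      [/\ o1 U, o2 V, U q.1, V q.2 & U `*` V `<=` W]].

Definition I01 {R : realType} : set R := [set t | 0 <= t <= 1].
Definition I01_open {R : realType} : set (set R) := sub_open I01 [set O : set R | open O].

Section Construction.
Context {X : topologicalType} {R : realType}.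

Definition tychonoff : Prop :=
  accessible_space X /\
  (forall (C : set X) (x : X), closed C -> ~ C x ->
     exists f : X -> R, [/\ continuous f, f x = 0 & forall y, C y -> f y = 1]).

Definition compatible_uniformity (U : set (set (X * X))) : Prop :=
  [/\ U setT,
      (forall E F, U E -> E `<=` F -> U F),
      (forall E F, U E -> U F -> U (E `&` F)) &
      (forall E, U E -> forall x, E (x, x))] /\
  [/\
      (forall E, U E -> U [set q | E (q.2, q.1)]),
      (forall E, U E -> exists2 F, U F & forall x y z, F (x, y) -> F (y, z) -> E (x, z)) &
      (forall (x : X) (B : set X), nbhs x B <-> exists2 E, U E & [set y | E (x, y)] `<=` B)].

(* Cauchy for the finest compatible uniformity (= Cauchy for every compatible one) *)
Definition fine_cauchy (F : set_system X) : Prop :=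
  forall U, compatible_uniformity U -> forall E, U E ->
  exists2 B, F B & forall x y, B x -> B y -> E (x, y).

Definition topologically_complete : Prop :=
  tychonoff /\
  forall F : set_system X, ProperFilter F -> fine_cauchy F -> exists x : X, nbhs x `<=` F.

Definition locally_finite (al : set (set X)) : Prop :=
  forall x : X, exists2 N, nbhs x N & finite_set [set V | al V /\ V `&` N !=set0].

Definition closed_lf_normal_cover (al : set (set X)) (ph : set X -> X -> R) : Prop :=
  [/\ (forall V, al V -> closed V),
      \bigcup_(V in al) V = setT,
      locally_finite al,
      (forall V, al V -> [/\ continuous (ph V), (forall x, 0 <= ph V x <= 1) &
                            closure [set x | 0 < ph V x] `<=` interior V]) &
      (forall x, \sum_(V \in al) ph V x = 1)].

Definition condI (A : set (set (set X))) : Prop :=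
  forall (U : set X) (x : X), open U -> U x ->
  exists2 al, A al & \bigcup_(V in [set V | al V /\ V x]) V `<=` U.

Definition condII (A : set (set (set X))) : Prop :=
  forall f : set (set X) -> set X, (forall al, A al -> al (f al)) ->
  (forall lam : set (set (set X)), finite_set lam -> lam `<=` A -> lam !=set0 ->
      \bigcap_(al in lam) f al !=set0) ->
  \bigcap_(al in A) f al !=set0.

(* vertices: functions v on lambda with v al in al; extended by X outside lambda *)
Definition Vert := set (set X) -> set X.
Definition Pt := Vert -> R.               (* barycentric coordinates *)
Definition Lamb := set (set (set X)).
Definition Zt := Lamb -> Pt.              (* points of the product of the N_lambda *)

Definition Lam (A : set (set (set X))) (lam : Lamb) : Prop := finite_set lam /\ lam `<=` A.

Definition wedge (lam : Lamb) (v : Vert) : set X := \bigcap_(al in lam) v al.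

Definition vertex (lam : Lamb) (v : Vert) : Prop :=
  [/\ (forall al, lam al -> al (v al)), (forall al, ~ lam al -> v al = setT) &
      wedge lam v !=set0].

(* points of (the geometric realisation of) N_lambda *)
Definition Npt (lam : Lamb) (a : Pt) : Prop :=
  [/\ (forall v, 0 <= a v), (forall v, a v != 0 -> vertex lam v),
      (exists x, forall v, a v != 0 -> wedge lam v x) &
      exists n (e : 'I_n -> Vert), [/\ injective e, (forall v, a v != 0 -> exists i, e i = v)
                                     & \sum_(i < n) a (e i) = 1]].

Definition simplex (lam : Lamb) (S : set Vert) : Prop :=
  [/\ finite_set S, (forall v, S v -> vertex lam v) & exists x, forall v, S v -> wedge lam v x].

Definition supp_in (a : Pt) (S : set Vert) : Prop := forall v, a v != 0 -> S v.

(* weak (Whitehead) topology on N_lambda *)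
Definition Nopen (lam : Lamb) : set (set Pt) :=
  [set U | U `<=` Npt lam /\
    forall S, simplex lam S -> forall a, U a -> supp_in a S ->
    exists2 eps : R, 0 < eps & forall b, Npt lam b -> supp_in b S ->
      (forall v, `|a v - b v| < eps) -> U b].

Definition restr (lam : Lamb) (v : Vert) : Vert :=
  fun al => if `[< lam al >] then v al else setT.

(* a = pi^mu_lam b  (simplicial map v |-> v|_lam on barycentric coordinates) *)
Definition bond (lam : Lamb) (b a : Pt) : Prop :=
  forall w, exists n (e : 'I_n -> Vert),
    [/\ injective e, (forall v, (b v != 0 /\ restr lam v = w) <-> exists i, e i = v)
      & a w = \sum_(i < n) b (e i)].

(* N_infty = inverse limit (coordinates outside Lambda fixed to 0) *)
Definition Ninf (A : set (set (set X))) : set Zt :=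
  [set z | [/\ (forall lam, Lam A lam -> Npt lam (z lam)),
              (forall lam, ~ Lam A lam -> z lam = fun=> 0) &
              (forall lam mu, Lam A lam -> Lam A mu -> lam `<=` mu -> bond lam (z mu) (z lam))]].

(* inverse limit topology = subspace topology of the product topology *)
Definition Ninf_open (A : set (set (set X))) : set (set Zt) :=
  [set W | W `<=` Ninf A /\
    forall z, W z -> exists n (ls : 'I_n -> Lamb) (Us : 'I_n -> set Pt),
      (forall i, [/\ Lam A (ls i), Nopen (ls i) (Us i) & Us i (z (ls i))]) /\
      (forall z', Ninf A z' -> (forall i, Us i (z' (ls i))) -> W z')].

Definition wedge_pt (lam : Lamb) (a : Pt) : set X :=
  [set x | forall v, a v != 0 -> wedge lam v x].

(* pi z is the (unique) point of  \bigcap_lam  wedge z(lam) *)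
Definition is_pi (A : set (set (set X))) (pi : Zt -> X) : Prop :=
  forall z, Ninf A z -> forall lam, Lam A lam -> wedge_pt lam (z lam) (pi z).

Definition pNmap (A : set (set (set X))) (phi : set (set X) -> set X -> X -> R) (x : X) : Zt :=
  fun lam v => if `[< Lam A lam /\ vertex lam v >]
               then \big[*%R/1%R]_(al \in lam) phi al (v al) x else 0.

End Construction.

(* The points of N_oo lying over x have, in every N_lambda, barycentric coordinates supported
   on the finitely many vertices whose wedge contains x (local finiteness), and so does the
   canonical point p x.  Hence a filter whose image under pi converges to x lives, once all
   other coordinates are discarded, in a product of compact intervals; by Tychonoff it has a
   cluster point there, which satisfies the closed conditions defining N_oo and lies over x.
   This gives at once that pi is closed and has compact fibres.
   The homotopy is the straight line from z to p (pi z): it stays in the fibre of z because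
   both ends are supported over pi z, and it is continuous because near pi z the supports stay
   among the vertices over pi z, on which p is continuous.  That p x lies in N_oo at all, i.e.
   p_lambda = pi^mu_lambda o p_mu, reduces, adding the covers of mu one at a time, to
   sum_V phi_(beta,V) = 1. *)

From HB Require Import structures.
From mathcomp Require Import all_boot all_order all_algebra.
From mathcomp Require Import all_classical all_reals all_analysis.
From mathcomp Require Import finmap.
From mathcomp Require Import ring lra.
Import Order.TTheory GRing.Theory Num.Theory numFieldNormedType.Exports.
Local Open Scope classical_set_scope.
Local Open Scope ring_scope.

Set Implicit Arguments. Unset Strict Implicit. Unset Printing Implicit Defensive.

Lemma finite_set_ind (T : choiceType) (P : set T -> Prop) :
  P set0 -> (forall x S, finite_set S -> ~ S x -> P S -> P (x |` S)) ->
  forall S, finite_set S -> P S.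
Proof.
move=> P0 PU S /finite_fsetP[F ->].
elim/fset1U_rect: F => [|x F xF IH]; first by rewrite set_fset0.
by rewrite set_fsetU1; apply: PU => //; exact/negP.
Qed.

Lemma finite_set_funs (I : choiceType) (T : Type) (c : T) (L : set I) :
  finite_set L -> forall B : I -> set T, (forall i, L i -> finite_set (B i)) ->
  finite_set [set f : I -> T | forall i, (L i -> B i (f i)) /\ (~ L i -> f i = c)].
Proof.
move: L; apply: finite_set_ind => [|x L FL Lx IH] B FB.
  apply: (sub_finite_set _ (finite_set1 (fun=> c))) => f /= Hf.
  by apply: funext => i; exact: (Hf i).2.
set F := [set f : I -> T | forall i, (L i -> B i (f i)) /\ (~ L i -> f i = c)].
pose ext (q : (I -> T) * T) i := if i == x then q.2 else q.1 i.
apply: (@sub_finite_set _ _ (ext @` (F `*` B x))); last first.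
  by apply/finite_image/finite_setX; [apply: IH => i Li | ]; apply: FB; [right | left].
move=> f Hf; exists (fun i => if i == x then c else f i, f x); last first.
  by apply: funext => i; rewrite /ext /=; case: eqP => // ->.
split=> [i|/=]; last by apply: (Hf x).1; left.
split=> [Li|nLi] /=; have [ix|nix] := eqVneq i x.
- by rewrite ix in Li.
- by apply: (Hf i).1; right.
- by [].
- by apply: (Hf i).2 => -[/eqP|]; rewrite ?(negbTE nix).
Qed.

Section big_enum.
Variables (R : Type) (idx : R) (op : Monoid.com_law idx).

Lemma big_ord_fsbig_range (T : choiceType) n (e : 'I_n -> T) (F : T -> R) :
  injective e -> \big[op/idx]_(i < n) F (e i) = \big[op/idx]_(v \in range e) F v.
Proof.
move=> ie; rewrite (fsbig_image setT e F); last by move=> a b _ _; apply: ie.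
rewrite (fsbigE (index_enum 'I_n)) ?index_enum_uniq //.
- by apply: eq_bigl => i; rewrite in_setT.
- by move=> i _; rewrite mem_index_enum.
Qed.

End big_enum.

Lemma finite_set_enum (T : choiceType) (S : set T) : finite_set S ->
  exists n (e : 'I_n -> T), injective e /\ range e = S.
Proof.
move=> FS; exists (size (fset_set S)), (tnth (in_tuple (fset_set S))); split.
  exact/tuple_uniqP/fset_uniq.
apply/seteqP; split=> [_ [i _ <-]|v Sv].
  by rewrite -in_setE -(in_fset_set FS) mem_tnth.
have vS : v \in fset_set S by rewrite in_fset_set // in_setE.
have iv : (index v (fset_set S) < size (fset_set S))%N by rewrite index_mem.
by exists (Ordinal iv) => //; rewrite (tnth_nth v) nth_index.
Qed.

Lemma filter_finite_forall (T : Type) (F : set_system T) (I : choiceType) (S : set I)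
    (P : I -> set T) :
  Filter F -> finite_set S -> (forall i, S i -> F (P i)) ->
  F (fun t => forall i, S i -> P i t).
Proof.
move=> FF FS FP; have := @filter_bigI T I (fset_set S) P F FF.
rewrite fset_setK //; apply=> i; rewrite in_fset_set // in_setE; exact: FP.
Qed.

Lemma continuous_fsbig (T U : topologicalType) (I : choiceType) (idx : U)
    (op : Monoid.com_law idx) (S : set I) (F : I -> T -> U) :
  continuous (fun x : U * U => op x.1 x.2) -> finite_set S ->
  (forall i, S i -> continuous (F i)) ->
  continuous (fun t => \big[op/idx]_(i \in S) F i t).
Proof.
move=> cop FS cF; under eq_fun do rewrite fsbig_finite // big_seq.
by apply: continuous_big => // i; rewrite in_fset_set // in_setE => /cF.
Qed.

Lemma cluster_closed (T : topologicalType) (F : set_system T) (C : set T) (f : T) :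
  cluster F f -> closed C -> F C -> C f.
Proof. by rewrite clusterE => cf /closure_id cC FC; rewrite cC; exact: cf. Qed.

Section real_facts.
Variable R : realType.

Lemma finite_set_pos_lb (T : choiceType) (S : set T) (e : T -> R) : finite_set S ->
  (forall t, S t -> 0 < e t) -> exists2 d, 0 < d & forall t, S t -> d <= e t.
Proof.
move=> FS e0; have : \forall d \near 0^'+, 0 < d /\ forall t, S t -> d <= e t.
  apply: filterI; first exact: nbhs_right_gt.
  apply: filter_finite_forall => // t /e0 et; near=> d; apply/ltW; near: d.
  exact: nbhs_right_lt.
by move=> /filter_ex [d [d0 Hd]]; exists d.
Unshelve. all: by end_near.
Qed.

Lemma convex_comb_dist_lt (t0 t z0 z p0 p e : R) :
  0 <= t0 <= 1 -> 0 <= z <= 1 -> 0 <= p <= 1 ->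
  `|z0 - z| < e / 3 -> `|p0 - p| < e / 3 -> `|t0 - t| < e / 3 ->
  `|((1 - t0) * z0 + t0 * p0) - ((1 - t) * z + t * p)| < e.
Proof.
move=> /andP[t00 t01] /andP[z00 z1] /andP[p00 p1] hz hp ht.
have -> : ((1 - t0) * z0 + t0 * p0) - ((1 - t) * z + t * p) =
  ((1 - t0) * (z0 - z) + t0 * (p0 - p)) + (t0 - t) * (p - z) by ring.
have h1 : `|(1 - t0) * (z0 - z)| <= `|z0 - z|.
  by rewrite normrM ger0_norm ?subr_ge0 // ler_piMl // lerBlDr lerDl.
have h2 : `|t0 * (p0 - p)| <= `|p0 - p| by rewrite normrM ger0_norm // ler_piMl.
have h3 : `|(t0 - t) * (p - z)| <= `|t0 - t|.
  by rewrite normrM ler_piMr // ler_norml; apply/andP; split; lra.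
have := ler_normD ((1 - t0) * (z0 - z)) (t0 * (p0 - p)).
have := ler_normD ((1 - t0) * (z0 - z) + t0 * (p0 - p)) ((t0 - t) * (p - z)).
lra.
Qed.

Lemma eq_fsum_supp (T : choiceType) (a : T -> R) (S S' : set T) :
  (forall v, a v != 0 -> (S v <-> S' v)) ->
  \sum_(v \in S) a v = \sum_(v \in S') a v.
Proof.
move=> SS'; rewrite fsbig_supp [RHS]fsbig_supp; apply: eq_fsbigl.
by apply/seteqP; split=> v [Sv nz]; have /SS' E := introN eqP nz; split=> //; apply/E.
Qed.

End real_facts.

Lemma rcont_prod_sub (T1 T2 : Type) (S1 : set T1) (o1 : set (set T1))
    (S2 : set T2) (o2 : set (set T2)) (o3 : set (set T1)) (F : set T1)
    (H : T1 * T2 -> T1) :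
  rcont (S1 `*` S2) (prod_open o1 o2) S1 o3 H -> F `<=` S1 ->
  (forall q, (F `*` S2) q -> F (H q)) ->
  rcont (F `*` S2) (prod_open (sub_open F o1) o2) F (sub_open F o3) H.
Proof.
move=> [_ HC] FS1 HF; split=> // _ [W oW ->] q [[Fq S2q] [_ Wq]].
have [U [V [oU oV Uq Vq UVW]]] := HC W oW q (conj (conj (FS1 _ Fq) S2q) Wq).
exists (F `&` U), V; split => //; first by exists U.
move=> q' [[Fq' Uq'] Vq']; have [[_ S2q'] Wq'] := UVW q' (conj Uq' Vq').
by split=> //; split; [apply: HF|].
Qed.

Section nerve.
Variables (X : topologicalType) (R : realType).
Local Notation Vert := (@Vert X).
Local Notation Pt := (@Pt X R).

Definition supp (a : Pt) : set Vert := [set v | a v != 0].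

Lemma supp_sub_eq0 (a : Pt) (S : set Vert) v : supp a `<=` S -> ~ S v -> a v = 0.
Proof. by move=> sS nSv; apply/eqP; apply: contraT => /sS. Qed.

Lemma Npt_finite_supp lam (a : Pt) : Npt lam a -> finite_set (supp a).
Proof.
case=> _ _ _ [n [e [_ he _]]]; apply: (sub_finite_set _ (finite_image e finite_finset)).
by move=> v /he [i <-]; exists i.
Qed.

Lemma Npt_sum1 lam (a : Pt) (S : set Vert) : Npt lam a -> supp a `<=` S ->
  \sum_(v \in S) a v = 1.
Proof.
case=> _ _ _ [n [e [ie he <-]]] sS; rewrite big_ord_fsbig_range //.
apply: eq_fsum_supp => v nz; split=> _; last exact: sS.
by have [i <-] := he v nz; exists i.
Qed.

Lemma Npt_supp_neq0 lam (a : Pt) : Npt lam a -> exists v, a v != 0.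
Proof.
move=> Na; apply: contrapT => a0; move: (Npt_sum1 Na (@subsetT _ _)).
rewrite fsbig1 => [/eqP|v _]; first by rewrite eq_sym oner_eq0.
by apply/eqP; apply: contrapT => nz; apply: a0; exists v; exact/negP.
Qed.

Lemma Npt_le1 lam (a : Pt) v : Npt lam a -> a v <= 1.
Proof.
move=> Na; have [a0 _ _ _] := Na; have [/eqP ->|nz] := boolP (a v == 0); first exact: ler01.
rewrite -(Npt_sum1 Na (@subset_refl _ (supp a))) (fsbigD1 v) ?lerDl ?fsumr_ge0 //.
exact: Npt_finite_supp Na.
Qed.

Lemma Npt_from_sum lam (a : Pt) (S : set Vert) :
  (forall v, 0 <= a v) -> finite_set S -> supp a `<=` S ->
  (forall v, a v != 0 -> vertex lam v) ->
  (exists x, forall v, a v != 0 -> wedge lam v x) ->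
  \sum_(v \in S) a v = 1 -> Npt lam a.
Proof.
move=> a0 FS sS av wx s1; split => //.
have [n [e [ie re]]] := finite_set_enum FS.
exists n, e; split => //; last by rewrite big_ord_fsbig_range // re.
by move=> v /sS; rewrite -re => -[i _ <-]; exists i.
Qed.

Lemma bond_fsum lam (b a : Pt) (S : set Vert) : bond lam b a -> supp b `<=` S ->
  forall w, a w = \sum_(v \in S `&` [set v | restr lam v = w]) b v.
Proof.
move=> Hb sS w; have [n [e [ie he ->]]] := Hb w; rewrite big_ord_fsbig_range //.
have re : range e = [set v | b v != 0 /\ restr lam v = w].
  by apply/seteqP; split=> [v [i _ <-]|v /he [i <-]]; [apply/he; exists i | exists i].
apply: eq_fsum_supp => v bv; rewrite re /=.
by split=> [[_ rv]|[_ rv]]; split=> //; exact: sS.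
Qed.

Lemma bond_from_fsum lam (b a : Pt) (S : set Vert) : finite_set S -> supp b `<=` S ->
  (forall w, a w = \sum_(v \in S `&` [set v | restr lam v = w]) b v) -> bond lam b a.
Proof.
move=> FS sS Ha w.
have FT : finite_set [set v | b v != 0 /\ restr lam v = w].
  by apply: (sub_finite_set _ FS) => v [/sS].
have [n [e [ie re]]] := finite_set_enum FT.
exists n, e; split => //.
  move=> v; split=> [bv|[i <-]].
    have : range e v by rewrite re; exact: bv.
    by case=> i _ <-; exists i.
  have : range e (e i) by exists i.
  by rewrite re.
rewrite Ha big_ord_fsbig_range // re; apply: eq_fsum_supp => v bv /=.
by split=> [[_ rv]|[_ rv]]; split=> //; exact: sS.
Qed.

Lemma Nopen_near lam (a0 : Pt) (S : set Vert) e : finite_set S ->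
  Nopen lam [set b | Npt lam b /\ forall v, S v -> `|a0 v - b v| < e].
Proof.
move=> FS; split=> [b []//|S' _ b [Nb Hb] _].
have [d d0 Hd] : exists2 d, 0 < d & forall v, S v -> d <= e - `|a0 v - b v|.
  by apply: finite_set_pos_lb => // v Sv; rewrite subr_gt0; exact: Hb.
exists d => // b' Nb' _ hb'; split=> // v Sv.
by have := ler_distD (b v) (a0 v) (b' v); have := hb' v; have := Hd v Sv; lra.
Qed.

End nerve.

Section vertices.
Variable X : topologicalType.
Local Notation Vert := (@Vert X).
Local Notation Lamb := (@Lamb X).

Definition star (al : set (set X)) (x : X) := [set V | al V /\ V x].

Definition verts_at (lam : Lamb) (x : X) := [set v : Vert | vertex lam v /\ wedge lam v x].

Definition vert_upd (u : Vert) (be : set (set X)) (V : set X) : Vert :=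
  fun al => if al == be then V else u al.

Lemma wedge1 al (v : Vert) : wedge [set al] v = v al.
Proof. by rewrite /wedge bigcap_set1. Qed.

Lemma Lam0 (A : set (set (set X))) : Lam A set0.
Proof. by split; [exact: finite_set0 | exact: sub0set]. Qed.

Lemma Lam1 (A : set (set (set X))) al : A al -> Lam A [set al].
Proof. by move=> Aal; split; [exact: finite_set1 | move=> b ->]. Qed.

Lemma vertex_in lam (v : Vert) al : vertex lam v -> lam al -> al (v al).
Proof. by case=> h _ _; apply: h. Qed.

Lemma restr_id lam (v : Vert) : vertex lam v -> restr lam v = v.
Proof.
by case=> _ vo _; apply: funext => al; rewrite /restr; case: asboolP => // /vo.
Qed.

Lemma restr_restr lam mu (v : Vert) : lam `<=` mu -> restr lam (restr mu v) = restr lam v.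
Proof.
move=> lm; apply: funext => al; rewrite /restr; case: asboolP => // la.
by rewrite asboolT //; apply: lm.
Qed.

Lemma restr_verts_at lam mu x (v : Vert) : lam `<=` mu -> verts_at mu x v ->
  verts_at lam x (restr lam v).
Proof.
move=> lm [[vl _ _] wx]; have wl : wedge lam (restr lam v) x.
  by move=> al /= la; rewrite /restr asboolT //; apply: wx; exact: lm.
split=> //; split=> [al la|al nl|]; last by exists x.
- by rewrite /restr asboolT //; apply: vl; exact: lm.
- by rewrite /restr asboolF.
Qed.

Lemma restr_upd lam (u : Vert) be V : ~ lam be -> restr lam (vert_upd u be V) = restr lam u.
Proof.
move=> nlb; apply: funext => al; rewrite /restr /vert_upd; case: asboolP => // la.
by case: eqP => // e; rewrite e in la.
Qed.

Lemma verts_at_upd mu x (u : Vert) be V : verts_at mu x u -> star be x V ->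
  verts_at (be |` mu) x (vert_upd u be V).
Proof.
move=> [[ul uo _] wu] [beV Vx]; have wv : wedge (be |` mu) (vert_upd u be V) x.
  by move=> al [->|mal]; rewrite /vert_upd; [rewrite eqxx | case: eqP => // _; apply: wu].
split=> //; split=> [al [->|mal]|al nal|]; last by exists x.
- by rewrite /vert_upd eqxx.
- by rewrite /vert_upd; case: eqP => [->|_] //; apply: ul.
rewrite /vert_upd; case: eqP => [e|_]; first by rewrite e in nal; case: nal; left.
by apply: uo => mal; apply: nal; right.
Qed.

Lemma verts_at_updE mu x (v : Vert) be : ~ mu be -> verts_at (be |` mu) x v ->
  [/\ verts_at mu x (restr mu v), star be x (v be) & v = vert_upd (restr mu v) be (v be)].
Proof.
move=> nmb Kv; split; first by apply: restr_verts_at Kv => al; right.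
  by have [[vl _ _] wx] := Kv; split; [apply: vl | apply: wx]; left.
apply: funext => al; rewrite /vert_upd /restr; case: eqP => [->//|ne].
have [[_ vo _] _] := Kv; case: asboolP => // nm; rewrite vo //; by case.
Qed.

Lemma vert_upd_inj mu be : ~ mu be ->
  {in [set q : Vert * set X | vertex mu q.1] &, injective (fun q => vert_upd q.1 be q.2)}.
Proof.
move=> nmb [u V] [u' V'] /set_mem [_ uo _] /set_mem [_ uo' _] /= e.
have eV : V = V' by have := congr1 (fun f => f be) e; rewrite /vert_upd eqxx.
congr pair => //; apply: funext => al; have [->|ne] := eqVneq al be.
  by move: (uo _ nmb) (uo' _ nmb) => /= -> ->.
by have := congr1 (fun f => f al) e; rewrite /vert_upd (negbTE ne).
Qed.

End vertices.

Section canonical_map.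
Variables (X : topologicalType) (R : realType).
Local Notation Vert := (@Vert X).
Local Notation Lamb := (@Lamb X).
Variables (A : set (set (set X))) (phi : set (set X) -> set X -> X -> R).
Hypothesis Hcov : forall al, A al -> closed_lf_normal_cover al (phi al).

Lemma finite_star al x : A al -> finite_set (star al x).
Proof.
move=> /Hcov [_ _ lf _ _]; have [N Nx FN] := lf x.
apply: (sub_finite_set _ FN) => V [alV Vx]; split=> //; exists x; split=> //.
exact: nbhs_singleton.
Qed.

Lemma finite_verts_at lam x : Lam A lam -> finite_set (verts_at lam x).
Proof.
move=> [Fl lA]; have := finite_set_funs setT Fl (fun al la => finite_star x (lA _ la)).
apply: sub_finite_set => v [[vl vo _] wx] al.
by split=> [la|]; [split; [exact: vl | exact: wx] | exact: vo].
Qed.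

Lemma phi_ge0 al V x : A al -> al V -> 0 <= phi al V x.
Proof.
move=> Aal alV; have [_ _ _ Hph _] := Hcov Aal; have [_ b _] := Hph _ alV.
by have /andP[] := b x.
Qed.

Lemma phi_neq0_mem al V x : A al -> al V -> phi al V x != 0 -> V x.
Proof.
move=> Aal alV nz; have [_ _ _ Hph _] := Hcov Aal; have [_ b cl] := Hph _ alV.
have pos : 0 < phi al V x by rewrite lt_neqAle eq_sym nz; have /andP[] := b x.
by apply: interior_subset; apply: cl; exact: subset_closure.
Qed.

Lemma sum_phi_star al x : A al -> \sum_(V \in star al x) phi al V x = 1.
Proof.
move=> Aal; have [_ _ _ _ s1] := Hcov Aal; rewrite -(s1 x); apply: eq_fsum_supp => V nz.
by split=> [[]//|alV]; split=> //; exact: phi_neq0_mem nz.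
Qed.

Definition phi_prod (x : X) (lam : Lamb) (v : Vert) : R :=
  \big[*%R/1%R]_(al \in lam) phi al (v al) x.

Lemma phi_prod_ge0 lam x v : Lam A lam -> vertex lam v -> 0 <= phi_prod x lam v.
Proof.
move=> [Fl lA] vv; rewrite /phi_prod fsbig_finite // big_seq prodr_ge0 // => al.
by rewrite in_fset_set // in_setE => la; apply: phi_ge0 (lA _ la) (vertex_in vv la).
Qed.

Lemma phi_prod_neq0_wedge lam x v : Lam A lam -> vertex lam v ->
  phi_prod x lam v != 0 -> wedge lam v x.
Proof.
move=> [Fl lA] vv nz al la; apply: (phi_neq0_mem (lA _ la) (vertex_in vv la)).
by apply: contra_neq nz => phi0; rewrite /phi_prod (fsbigD1 al) //= phi0 mul0r.
Qed.

Lemma phi_prod_upd x mu (u : Vert) be V : finite_set mu -> ~ mu be ->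
  phi_prod x (be |` mu) (vert_upd u be V) = phi be V x * phi_prod x mu u.
Proof.
move=> Fm nmb; rewrite /phi_prod (fsbigD1 be) /=; [|by rewrite finite_setU; split|by left].
rewrite /vert_upd eqxx setDUl setDv set0U not_setD1 //; congr (_ * _); apply: eq_fsbigr => al.
by rewrite in_setE; case: eqP => // -> /nmb.
Qed.

Lemma sum_phi_prod_setU1 lam mu be x w : lam `<=` mu -> Lam A mu -> A be -> ~ mu be ->
  \sum_(v \in verts_at (be |` mu) x `&` [set v | restr lam v = w]) phi_prod x (be |` mu) v =
  \sum_(v \in verts_at mu x `&` [set v | restr lam v = w]) phi_prod x mu v.
Proof.
move=> lm [Fm mA] Abe nmb; set S := verts_at mu x `&` [set v | restr lam v = w].
have nlb : ~ lam be by move/lm.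
pose upd (q : Vert * set X) := vert_upd q.1 be q.2.
have -> : verts_at (be |` mu) x `&` [set v | restr lam v = w] = upd @` (S `*` star be x).
  apply/seteqP; split=> [v [Kv rv]|_ [[u V] [[Ku ru] SV] <-]].
    have [Kmv Sv ev] := verts_at_updE nmb Kv.
    exists (restr mu v, v be) => //; split=> //; split=> //=.
    by rewrite restr_restr.
  by split; [exact: verts_at_upd | rewrite /= /upd restr_upd].
rewrite fsbig_image; last first.
  move=> q q' /set_mem [[[vq _] _] _] /set_mem [[[vq' _] _] _].
  by apply: (vert_upd_inj nmb); rewrite in_setE.
rewrite -(@pair_fsbig _ _ _ _ _ _ _ (fun u V => phi_prod x (be |` mu) (upd (u, V)))); last 2 first.
- by apply: finite_setIl; exact: finite_verts_at.
- exact: finite_star.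
apply: eq_fsbigr => u _; under eq_fsbigr do rewrite phi_prod_upd //.
by rewrite /= -mulr_fsuml sum_phi_star // mul1r.
Qed.

Lemma sum_phi_prod_setU lam x D w : Lam A lam -> finite_set D -> D `<=` A ->
  verts_at lam x w ->
  \sum_(v \in verts_at (lam `|` D) x `&` [set v | restr lam v = w]) phi_prod x (lam `|` D) v =
  phi_prod x lam w.
Proof.
move=> Ll FD; move: D FD; apply: finite_set_ind => [|be D FD nDbe IH] DA Kw.
  rewrite setU0 (_ : _ `&` _ = [set w]) ?fsbig_set1 //.
  apply/seteqP; split=> [v [[vv _] /= <-]|v ->]; first by rewrite restr_id.
  by split=> //=; rewrite restr_id //; case: Kw.
have {}IH := IH (fun al Dal => DA al (or_intror Dal)) Kw.
have [lDbe|nlDbe] := pselect ((lam `|` D) be).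
  by rewrite setUCA (setUidr (_ : [set be] `<=` _)) // => _ ->.
have [Fl lA] := Ll; have LlD : Lam A (lam `|` D).
  split; first by rewrite finite_setU.
  by move=> al [/lA|Dal] //; apply: DA; right.
by rewrite setUCA sum_phi_prod_setU1 //; apply: DA; left.
Qed.

Lemma sum_phi_prod lam x : Lam A lam -> \sum_(v \in verts_at lam x) phi_prod x lam v = 1.
Proof.
move=> [Fl lA]; have K0 : verts_at set0 x (fun=> setT).
  by split=> //; split=> //; exists x.
have := sum_phi_prod_setU (Lam0 A) Fl lA K0; rewrite set0U [phi_prod _ set0 _]fsbig_set0 => <-.
apply: eq_fsbigl; apply/seteqP; split=> [v Kv|v []//]; split=> //=.
by apply: funext => al; rewrite /restr asboolF.
Qed.

Lemma pNmapE x lam v : Lam A lam -> vertex lam v -> pNmap A phi x lam v = phi_prod x lam v.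
Proof. by move=> Ll vv; rewrite /pNmap asboolT. Qed.

Lemma pNmap_supp lam x : supp (pNmap A phi x lam) `<=` verts_at lam x.
Proof.
move=> v; rewrite /supp /= /pNmap; case: asboolP => [[Ll vv] nz|_]; last by rewrite eqxx.
by split=> //; exact: phi_prod_neq0_wedge.
Qed.

Lemma pNmap_ge0 lam x v : 0 <= pNmap A phi x lam v.
Proof. by rewrite /pNmap; case: asboolP => // -[Ll vv]; exact: phi_prod_ge0. Qed.

Lemma Npt_pNmap lam x : Lam A lam -> Npt lam (pNmap A phi x lam).
Proof.
move=> Ll; apply: (@Npt_from_sum _ _ _ _ (verts_at lam x)).
- by move=> v; exact: pNmap_ge0.
- exact: finite_verts_at.
- exact: pNmap_supp.
- by move=> v /pNmap_supp [].
- by exists x => v /pNmap_supp [].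
- rewrite -(sum_phi_prod x Ll); apply: eq_fsbigr => v /set_mem [vv _].
  exact: pNmapE.
Qed.

Lemma bond_pNmap lam mu x : Lam A lam -> Lam A mu -> lam `<=` mu ->
  bond lam (pNmap A phi x mu) (pNmap A phi x lam).
Proof.
move=> Ll Lm lm; apply: (@bond_from_fsum _ _ _ _ _ (verts_at mu x)).
- exact: finite_verts_at.
- exact: pNmap_supp.
move=> w; have [Kw|nKw] := pselect (verts_at lam x w).
  have [Fm mA] := Lm.
  have := sum_phi_prod_setU (D := mu `\` lam) Ll (finite_setD _ Fm) (fun al Dal => mA al Dal.1) Kw.
  rewrite setDUK // -pNmapE //; last by case: Kw.
  by move=> <-; apply: eq_fsbigr => v /set_mem [[vv _] _]; rewrite pNmapE.
rewrite fsbig1 => [|v [Kv rv]]; last by rewrite -rv in nKw; case: nKw; exact: restr_verts_at Kv.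
by apply/eqP; apply: contraT => nz; case: nKw; exact: pNmap_supp.
Qed.

Lemma Ninf_pNmap x : Ninf A (pNmap A phi x).
Proof.
split=> [lam|lam nL|lam mu Ll Lm lm]; first exact: Npt_pNmap.
- by apply: funext => v; rewrite /pNmap asboolF // => -[].
- exact: bond_pNmap.
Qed.

Lemma pNmap_continuous lam v : continuous (fun y => pNmap A phi y lam v).
Proof.
rewrite /pNmap; case: asboolP => [[[Fl lA] vv]|_]; last exact: cst_continuous.
apply: continuous_fsbig => // [|al la]; first exact: mul_continuous.
by have [_ _ _ Hph _] := Hcov (lA _ la); have [] := Hph _ (vertex_in vv la).
Qed.

Lemma near_star_sub al x : A al -> \forall y \near x, forall V, al V -> V y -> V x.
Proof.
move=> Aal; have [clo _ lf _ _] := Hcov Aal; have [N Nx FN] := lf x.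
set F := [set V | al V /\ V `&` N !=set0] `&` [set V | ~ V x].
have : \forall y \near x, forall V, F V -> ~ V y.
  apply: filter_finite_forall; first exact: finite_setIl.
  move=> V [[alV _] nVx]; apply: open_nbhs_nbhs; split=> //.
  by apply: closed_openC; exact: clo.
apply: filterS2 Nx => y Ny Hy V alV Vy; apply: contrapT => nVx.
by apply: (Hy V) => //; split=> //; split=> //; exists y.
Qed.

Lemma near_verts_at lam x : Lam A lam ->
  \forall y \near x, forall v : Vert, vertex lam v -> wedge lam v y -> wedge lam v x.
Proof.
move=> [Fl lA]; have : \forall y \near x, forall al, lam al -> forall V, al V -> V y -> V x.
  by apply: filter_finite_forall => // al la; apply: near_star_sub; exact: lA.
by apply: filterS => y H v vv wy al la; exact: H al la _ (vertex_in vv la) (wy al la).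
Qed.

Lemma near_pNmap lam x (e : R) : Lam A lam -> 0 < e -> \forall y \near x,
  forall v, verts_at lam x v -> `|pNmap A phi x lam v - pNmap A phi y lam v| < e.
Proof.
move=> Ll e0; apply: filter_finite_forall => [|v _]; first exact (finite_verts_at x Ll).
have := @pNmap_continuous lam v x _ (nbhsx_ballx _ _ e0).
by apply: (@filterS _ (nbhs x) _) => y; rewrite /= -ball_normE.
Qed.

End canonical_map.

Section projection.
Variables (X : topologicalType) (R : realType).
Local Notation Pt := (@Pt X R).
Local Notation Lamb := (@Lamb X).
Local Notation Zt := (@Zt X R).
Variables (A : set (set (set X))) (phi : set (set X) -> set X -> X -> R) (pi : Zt -> X).
Hypothesis HT1 : accessible_space X.
Hypothesis Hcov : forall al, A al -> closed_lf_normal_cover al (phi al).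
Hypothesis HI : condI A.
Hypothesis Hpi : is_pi A pi.

Lemma pi_eq (z : Zt) y : Ninf A z ->
  (forall lam, Lam A lam -> wedge_pt lam (z lam) y) -> pi z = y.
Proof.
move=> Nz Hy; apply: contrapT => /eqP /HT1 [U [oU]]; rewrite !in_setE => Upz nUy.
have [al Aal Hal] := HI oU Upz; have [zN _ _] := Nz; have Lal := Lam1 Aal.
have [v nz] := Npt_supp_neq0 (zN _ Lal); have [_ vv _ _] := zN _ Lal.
have := Hy _ Lal v nz; have := Hpi Nz Lal nz; rewrite !wedge1 => vpz vy.
by apply: nUy; apply: Hal; exists (v al) => //; split=> //; exact: vertex_in (vv _ nz) _.
Qed.

Lemma Ninf_supp (z : Zt) lam : Ninf A z -> Lam A lam -> supp (z lam) `<=` verts_at lam (pi z).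
Proof.
move=> Nz Ll v nz; have [zN _ _] := Nz; have [_ vv _ _] := zN _ Ll.
by split; [exact: vv | exact: (Hpi Nz Ll nz)].
Qed.

Lemma pi_pNmap x : pi (pNmap A phi x) = x.
Proof.
by apply: pi_eq (Ninf_pNmap Hcov x) _ => lam Ll v /(pNmap_supp Hcov) [].
Qed.

Lemma Ninf_open_basic n (ls : 'I_n -> Lamb) (Us : 'I_n -> set Pt) :
  (forall i, Lam A (ls i) /\ Nopen (ls i) (Us i)) ->
  Ninf_open A [set z | Ninf A z /\ forall i, Us i (z (ls i))].
Proof.
move=> H; split=> [z []//|z [Nz Uz]]; exists n, ls, Us; split=> // i.
by have [? ?] := H i; split.
Qed.

Lemma Ninf_openI (W1 W2 : set Zt) : Ninf_open A W1 -> Ninf_open A W2 ->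
  Ninf_open A (W1 `&` W2).
Proof.
move=> [s1 h1] [_ h2]; split=> [z [/s1]//|z [/h1 [n1 [ls1 [Us1 [H1 K1]]]]]].
move=> /h2 [n2 [ls2 [Us2 [H2 K2]]]].
pose cat T (f1 : 'I_n1 -> T) (f2 : 'I_n2 -> T) i :=
  match fintype.split i with inl j => f1 j | inr k => f2 k end.
exists (n1 + n2)%N, (cat _ ls1 ls2), (cat _ Us1 Us2); split=> [i|z' Nz' H].
  by rewrite /cat; case: fintype.split.
split; [apply: K1 => // j; have := H (lshift n2 j) | apply: K2 => // k; have := H (rshift n1 k)].
  by rewrite /cat (_ : lshift n2 j = unsplit (inl j)) // unsplitK.
by rewrite /cat (_ : rshift n1 k = unsplit (inr k)) // unsplitK.
Qed.

Lemma Ninf_open_pi (U : set X) : open U -> Ninf_open A (Ninf A `&` pi @^-1` U).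
Proof.
move=> oU; split=> [z []//|z [Nz Upz]]; have [al Aal Hal] := HI oU Upz.
have Lal := Lam1 Aal; have [zN _ _] := Nz.
have [v0 nz] := Npt_supp_neq0 (zN _ Lal); have [z0 vv _ _] := zN _ Lal.
pose O := [set b : Pt | Npt [set al] b /\ 0 < b v0].
exists 1%N, (fun=> [set al]), (fun=> O); split=> [_|z' Nz' /(_ ord0) [_ pos]].
  split=> //; last by split; [exact: zN | rewrite lt_neqAle eq_sym nz z0].
  split=> [b []//|S _ a [Na av] _]; exists (a v0) => // b Nb _ /(_ v0).
  by rewrite ltr_distlC subrr => /andP[b0 _].
split=> //; have := Hpi Nz' Lal (lt0r_neq0 pos); have := Hpi Nz Lal nz.
rewrite !wedge1 => v0pz v0pz'; apply: Hal; exists (v0 al) => //; split=> //.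
exact: vertex_in (vv _ nz) _.
Qed.

Lemma pi_rcont : rcont (Ninf A) (Ninf_open A) setT open pi.
Proof. by split=> // U oU; exact: Ninf_open_pi. Qed.

Lemma Ninf_open_near (W : set Zt) (z0 : Zt) x0 : Ninf_open A W -> W z0 ->
  (forall lam, Lam A lam -> supp (z0 lam) `<=` verts_at lam x0) ->
  exists n (ls : 'I_n -> Lamb) (e : R), [/\ forall i, Lam A (ls i), 0 < e &
    forall z, Ninf A z -> (forall i, supp (z (ls i)) `<=` verts_at (ls i) x0) ->
    (forall i v, verts_at (ls i) x0 v -> `|z0 (ls i) v - z (ls i) v| < e) -> W z].
Proof.
move=> [_ HW] Wz0 sz0; have [n [ls [Us [H1 K]]]] := HW z0 Wz0.
have eps_ex i : exists e : R, 0 < e /\ forall b, Npt (ls i) b ->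
    supp b `<=` verts_at (ls i) x0 ->
    (forall v, verts_at (ls i) x0 v -> `|z0 (ls i) v - b v| < e) -> Us i b.
  have [Li [_ Hopen] Uz] := H1 i.
  have sim : simplex (ls i) (verts_at (ls i) x0).
    split; [exact (finite_verts_at Hcov x0 Li) | by move=> v [] | by exists x0 => v []].
  have [e e0 He] := Hopen _ sim (z0 (ls i)) Uz (sz0 _ Li).
  exists e; split=> // b Nb sb hb; apply: He => // v.
  have [/hb//|nK] := pselect (verts_at (ls i) x0 v).
  by rewrite (supp_sub_eq0 (sz0 _ Li) nK) (supp_sub_eq0 sb nK) subrr normr0.
have [eps epsP] := choice eps_ex.
have [e e0 le_e] := finite_set_pos_lb (@finite_finset _ [set: 'I_n]) (fun i _ => (epsP i).1).
exists n, ls, e; split=> [i|//|z Nz sz hz]; first by have [] := H1 i.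
apply: K => // i; have [zN _ _] := Nz; have [Li _ _] := H1 i.
apply: (epsP i).2 => [||v Kv]; [exact: zN | exact: sz |].
exact: lt_le_trans (hz i v Kv) (le_e i I).
Qed.

End projection.

Section cluster.
Import ArrowAsProduct.
Variables (X : topologicalType) (R : realType).
Local Notation Vert := (@Vert X).
Local Notation Lamb := (@Lamb X).
Local Notation Zt := (@Zt X R).
Local Notation PT := ((Lamb * Vert)%type -> R).
Variables (A : set (set (set X))) (phi : set (set X) -> set X -> X -> R) (pi : Zt -> X).
Hypothesis HT1 : accessible_space X.
Hypothesis Hcov : forall al, A al -> closed_lf_normal_cover al (phi al).
Hypothesis HI : condI A.
Hypothesis Hpi : is_pi A pi.
Variable x0 : X.

Definition vert_over (q : Lamb * Vert) : Prop := Lam A q.1 /\ verts_at q.1 x0 q.2.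

(* Only the coordinates at vertices over [x0] are kept: along [Phi] they range in a product of
   compact intervals. *)
Definition coords (z : Zt) : PT := fun q => if `[< vert_over q >] then z q.1 q.2 else 0.

Definition of_coords (f : PT) : Zt := fun lam v => f (lam, v).

Variable Phi : set_system Zt.
Hypothesis PF : ProperFilter Phi.
Hypothesis PhiN : Phi (Ninf A).
Hypothesis Phipi : forall U, nbhs x0 U -> Phi (pi @^-1` U).

Lemma near_Ninf_supp lam : Lam A lam ->
  Phi [set z | Ninf A z /\ supp (z lam) `<=` verts_at lam x0].
Proof.
move=> Ll; apply: filterS2 PhiN (Phipi (near_verts_at Hcov x0 Ll)) => z Nz Hz.
split=> // v nz; have [vv _] := Ninf_supp Hpi Nz Ll nz.
by split=> //; apply: Hz vv (Hpi Nz Ll nz).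
Qed.

Lemma coordsE lam (z : Zt) v : Lam A lam -> supp (z lam) `<=` verts_at lam x0 ->
  coords z (lam, v) = z lam v.
Proof.
move=> Ll sz; rewrite /coords; case: asboolP => // nK.
by rewrite (supp_sub_eq0 sz) // => Kv; apply: nK.
Qed.

Lemma cluster_coords_exists : exists f : PT, [/\ forall q, 0 <= f q,
  forall q, ~ vert_over q -> f q = 0 & cluster (coords @ Phi) f].
Proof.
pose bnd q : R := if `[< vert_over q >] then 1 else 0.
have cK : compact [set f : PT | forall q, `[0, bnd q]%classic (f q)].
  exact: tychonoff (fun q => @segment_compact R 0 (bnd q)).
have [|f [Kf cf]] := cK (coords @ Phi) (fmap_proper_filter _ PF).
  apply: (@filterS _ Phi _ _ _ _ PhiN) => z [zN _ _] q /=.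
  rewrite /coords /bnd in_itv /=; case: asboolP => [[Ll Kq]|_]; last by rewrite lexx.
  by have [z0 _ _ _] := zN _ Ll; rewrite z0 (Npt_le1 _ (zN _ Ll)).
exists f; split=> // q; have := Kf q; rewrite /= in_itv /bnd /=.
  by case/andP.
by case: asboolP => // _ /andP[f0 f1] _; apply/le_anti; rewrite f0 f1.
Qed.

Section limit.
Variable f : PT.
Hypothesis f_ge0 : forall q, 0 <= f q.
Hypothesis f_out : forall q, ~ vert_over q -> f q = 0.
Hypothesis cf : cluster (coords @ Phi) f.

Let coord_continuous q : continuous (fun h : PT => h q).
Proof. exact: proj_continuous. Qed.

Lemma cluster_coords_eq (g : PT -> R) c : continuous g ->
  Phi [set y | g (coords y) = c] -> g f = c.
Proof.
move=> cg Hc; apply: (cluster_closed (C := [set h | g h = c]) cf _ Hc).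
exact: (preimage_closed (fun x _ => cg x) (@closed_eq _ c)).
Qed.

Lemma of_coords_neq0 lam v : of_coords f lam v != 0 -> vert_over (lam, v).
Proof. by move=> nz; apply: contrapT => /f_out f0; rewrite /of_coords f0 eqxx in nz. Qed.

Lemma Npt_of_coords lam : Lam A lam -> Npt lam (of_coords f lam).
Proof.
move=> Ll; apply: (@Npt_from_sum _ _ _ _ (verts_at lam x0)) => [v||v|v||].
- exact: f_ge0.
- exact (finite_verts_at Hcov x0 Ll).
- by move=> /of_coords_neq0 [].
- by move=> /of_coords_neq0 [_ []].
- by exists x0 => v /of_coords_neq0 [_ []].
apply: (cluster_coords_eq (g := fun h => \sum_(v \in verts_at lam x0) h (lam, v))).
  apply: continuous_fsbig => //; [exact: add_continuous | exact (finite_verts_at Hcov x0 Ll)].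
apply: filterS (near_Ninf_supp Ll) => y [[yN _ _] sy] /=.
by under eq_fsbigr do rewrite coordsE //; exact: Npt_sum1 (yN _ Ll) sy.
Qed.

Lemma bond_of_coords lam mu : Lam A lam -> Lam A mu -> lam `<=` mu ->
  bond lam (of_coords f mu) (of_coords f lam).
Proof.
move=> Ll Lm lm; have FK := finite_verts_at Hcov x0 Lm.
apply: (@bond_from_fsum _ _ _ _ _ (verts_at mu x0)) => // [v /of_coords_neq0 []//|w].
set S := verts_at mu x0 `&` [set v | restr lam v = w].
have cS : continuous (fun h : PT => \sum_(v \in S) h (mu, v)).
  by apply: continuous_fsbig => //; [exact: add_continuous | exact: finite_setIl].
apply/eqP; rewrite -subr_eq0; apply/eqP.
apply: (cluster_coords_eq (g := fun h => h (lam, w) - \sum_(v \in S) h (mu, v))).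
  by move=> h; apply: continuousB; [exact: coord_continuous | exact: cS].
apply: filterS2 (near_Ninf_supp Ll) (near_Ninf_supp Lm) => y [[_ _ yb] syl] [_ sym] /=.
under eq_fsbigr do rewrite coordsE //.
by rewrite coordsE // -(bond_fsum (yb _ _ Ll Lm lm) sym) subrr.
Qed.

Lemma Ninf_of_coords : Ninf A (of_coords f).
Proof.
split=> [lam|lam nL|]; [exact: Npt_of_coords | | exact: bond_of_coords].
by apply: funext => v; apply: f_out => -[].
Qed.

Lemma pi_of_coords : pi (of_coords f) = x0.
Proof.
by apply: (pi_eq HT1 HI Hpi Ninf_of_coords) => lam Ll v /of_coords_neq0 [_ [_]].
Qed.

Lemma of_coords_cluster (W : set Zt) : Ninf_open A W -> W (of_coords f) ->
  forall B, Phi B -> W `&` B !=set0.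
Proof.
move=> oW Wz B PhiB.
have [n [ls [e [Lls e0 HW]]]] :=
  Ninf_open_near Hcov oW Wz (fun lam _ v nz => (of_coords_neq0 nz).2).
have nC : \forall h \near f,
    forall i v, verts_at (ls i) x0 v -> `|f (ls i, v) - h (ls i, v)| < e.
  apply: (@filter_forall PT _ _ (nbhs f)) => i; apply: filter_finite_forall => [|v _].
    exact (finite_verts_at Hcov x0 (Lls i)).
  have := @coord_continuous (ls i, v) f _ (nbhsx_ballx _ _ e0).
  by apply: (@filterS _ (nbhs f) _) => h; rewrite /= -ball_normE.
pose B' := B `&` Ninf A `&` [set y | forall i, supp (y (ls i)) `<=` verts_at (ls i) x0].
have PhiB' : Phi B'.
  apply: filterI; first exact: filterI.
  by apply: filter_forall => i; apply: filterS (near_Ninf_supp (Lls i)) => y [].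
have : (coords @ Phi) (coords @` B') by apply: (@filterS _ Phi _ _ _ _ PhiB') => y By; exists y.
move=> /cf /(_ nC) [_ [[y [[By Ny] sy] <-] Cy]]; exists y; split=> //.
apply: HW => // i v Kv; have := Cy i v Kv; by rewrite coordsE.
Qed.

End limit.

Lemma Ninf_cluster_over : exists z, [/\ Ninf A z, pi z = x0 &
  forall W, Ninf_open A W -> W z -> forall B, Phi B -> W `&` B !=set0].
Proof.
have [f [f_ge0 f_out cf]] := cluster_coords_exists.
exists (of_coords f); split; [exact: Ninf_of_coords | exact: pi_of_coords |].
exact: of_coords_cluster.
Qed.

End cluster.

Section perfect.
Variables (X : topologicalType) (R : realType).
Local Notation Zt := (@Zt X R).
Variables (A : set (set (set X))) (phi : set (set X) -> set X -> X -> R) (pi : Zt -> X).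
Hypothesis HT1 : accessible_space X.
Hypothesis Hcov : forall al, A al -> closed_lf_normal_cover al (phi al).
Hypothesis HI : condI A.
Hypothesis Hpi : is_pi A pi.

Lemma pi_compact_fibre x : rcompact (Ninf_open A) (Ninf A `&` pi @^-1` [set x]).
Proof.
move=> C Csub cov; apply: contrapT => nfin.
pose Fx := Ninf A `&` pi @^-1` [set x].
pose Ds := [set D : set (set Zt) | finite_set D /\ D `<=` C].
pose Phi := filter_from Ds (fun D => Fx `\` \bigcup_(U in D) U).
have Ds0 : Ds set0 by split; [exact: finite_set0 | exact: sub0set].
have PPhi : ProperFilter Phi.
  apply: filter_from_proper; last first.
    move=> D [FD SD]; apply: contrapT => ne; apply: nfin; exists D => // z Fz.
    by apply: contrapT => nz; apply: ne; exists z.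
  apply: filter_from_filter; first by exists set0.
  move=> D1 D2 [F1 S1] [F2 S2]; exists (D1 `|` D2).
    by split; [rewrite finite_setU | move=> U [/S1|/S2]].
  by move=> z [Fz nU]; split; split=> // -[U DU Uz]; apply: nU; exists U => //; [left|right].
have [|U xU|z [Nz pz Hz]] := @Ninf_cluster_over _ _ _ _ _ HT1 Hcov HI Hpi x _ PPhi.
- by exists set0 => // z [[]].
- by exists set0 => // z [[_ /= ->] _]; exact: nbhs_singleton.
have [W CW Wz] := cov z (conj Nz pz).
have [|y [Wy [_ nW]]] := Hz W (Csub _ CW) Wz (Fx `\` \bigcup_(U in [set W]) U).
  by exists [set W] => //; split; [exact: finite_set1 | move=> U ->].
by apply: nW; exists W.
Qed.

Lemma pi_closed C : rclosed (Ninf A) (Ninf_open A) C -> closed (pi @` C).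
Proof.
move=> [CN oC] x clx; pose Phi := filter_from (nbhs x) (fun U => C `&` pi @^-1` U).
have PPhi : ProperFilter Phi.
  apply: filter_from_proper => [|U xU]; last first.
    by have [y [[z Cz <-] Uy]] := clx U xU; exists z.
  apply: filter_from_filter; first by exists setT; exact: filterT.
  move=> U V xU xV; exists (U `&` V); first exact: filterI.
  by move=> z [Cz [Uz Vz]]; split; split.
have [|U xU|z [Nz pz Hz]] := @Ninf_cluster_over _ _ _ _ _ HT1 Hcov HI Hpi x _ PPhi.
- by exists setT; [exact: filterT | move=> z [/CN]].
- by exists U => // z [].
have [Cz|nCz] := pselect (C z); first by exists z.
have [|y [[_ nCy] Cy]] := Hz _ oC (conj Nz nCz) C; last by case: nCy.
by exists setT; [exact: filterT | move=> y []].
Qed.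

End perfect.

Section homotopy.
Variables (X : topologicalType) (R : realType).
Local Notation Pt := (@Pt X R).
Local Notation Zt := (@Zt X R).
Variables (A : set (set (set X))) (phi : set (set X) -> set X -> X -> R) (pi : Zt -> X).
Hypothesis HT1 : accessible_space X.
Hypothesis Hcov : forall al, A al -> closed_lf_normal_cover al (phi al).
Hypothesis HI : condI A.
Hypothesis Hpi : is_pi A pi.

Definition straight_homotopy (q : Zt * R) : Zt :=
  fun lam v => (1 - q.2) * q.1 lam v + q.2 * pNmap A phi (pi q.1) lam v.

Lemma straight_homotopy0 z : straight_homotopy (z, 0) = z.
Proof.
by apply/funext => lam; apply/funext => v; rewrite /straight_homotopy /= subr0 mul1r mul0r addr0.
Qed.

Lemma straight_homotopy1 z : straight_homotopy (z, 1) = pNmap A phi (pi z).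
Proof.
by apply/funext => lam; apply/funext => v; rewrite /straight_homotopy /= subrr mul0r add0r mul1r.
Qed.

Lemma supp_straight_homotopy z t lam : Ninf A z -> Lam A lam ->
  supp (straight_homotopy (z, t) lam) `<=` verts_at lam (pi z).
Proof.
move=> Nz Ll v; rewrite /supp /straight_homotopy /= => nz.
have [zv|zv] := eqVneq (z lam v) 0; last exact (Ninf_supp Hpi Nz Ll zv).
by apply: (pNmap_supp Hcov); apply: contra_neq nz => ->; rewrite zv !mulr0 addr0.
Qed.

Lemma Ninf_straight_homotopy z t : Ninf A z -> I01 t -> Ninf A (straight_homotopy (z, t)).
Proof.
move=> Nz /andP[t0 t1]; have [zN zz zb] := Nz; have [pN pz pb] := Ninf_pNmap Hcov (pi z).
have sz := Ninf_supp Hpi Nz; have sp := @pNmap_supp _ _ _ _ Hcov ^~ (pi z).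
split=> [lam Ll|lam nL|lam mu Ll Lm lm].
- apply: (@Npt_from_sum _ _ _ _ (verts_at lam (pi z))) => [v|||||].
  + apply: addr_ge0; apply: mulr_ge0; rewrite ?subr_ge0 //; last exact: pNmap_ge0.
    by have [] := zN _ Ll.
  + exact (finite_verts_at Hcov (pi z) Ll).
  + exact: supp_straight_homotopy.
  + by move=> v /(supp_straight_homotopy Nz Ll) [].
  + by exists (pi z) => v /(supp_straight_homotopy Nz Ll) [].
  rewrite /straight_homotopy /= fsbig_split; last exact (finite_verts_at Hcov (pi z) Ll).
  rewrite -!mulr_fsumr (Npt_sum1 (zN _ Ll) (sz _ Ll)) (Npt_sum1 (pN _ Ll) (sp lam)).
  by rewrite /= !mulr1 subrK.
- by apply: funext => v; rewrite /straight_homotopy /= zz // pz // !mulr0 addr0.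
apply: (@bond_from_fsum _ _ _ _ _ (verts_at mu (pi z))) => [||w].
- exact (finite_verts_at Hcov (pi z) Lm).
- exact: supp_straight_homotopy.
rewrite /straight_homotopy /= fsbig_split; last first.
  by apply: finite_setIl; exact (finite_verts_at Hcov (pi z) Lm).
rewrite -!mulr_fsumr -(bond_fsum (zb _ _ Ll Lm lm) (sz _ Lm)).
by rewrite -(bond_fsum (pb _ _ Ll Lm lm) (sp mu)).
Qed.

Lemma pi_straight_homotopy z t : Ninf A z -> I01 t -> pi (straight_homotopy (z, t)) = pi z.
Proof.
move=> Nz It; apply: (pi_eq HT1 HI Hpi (Ninf_straight_homotopy Nz It)) => lam Ll v.
by move=> /(supp_straight_homotopy Nz Ll) [].
Qed.

Lemma straight_homotopy_rcont : rcont (Ninf A `*` I01) (prod_open (Ninf_open A) I01_open)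
  (Ninf A) (Ninf_open A) straight_homotopy.
Proof.
split=> [[z t] [/= Nz It]|W oW [z0 t0] [[/= Nz0 It0] /= Wq]].
  exact: Ninf_straight_homotopy.
set x0 := pi z0; have [n [ls [e [Lls e0 HW]]]] :=
  Ninf_open_near Hcov oW Wq (fun lam Ll => supp_straight_homotopy (t := t0) Nz0 Ll).
have e3 : 0 < e / 3 by rewrite divr_gt0.
pose U0 := [set y | forall i,
  (forall v, vertex (ls i) v -> wedge (ls i) v y -> wedge (ls i) v x0) /\
  (forall v, verts_at (ls i) x0 v -> `|pNmap A phi x0 (ls i) v - pNmap A phi y (ls i) v| < e / 3)].
have nU0 : nbhs x0 U0.
  apply: filter_forall => i; apply: filterI.
    exact (near_verts_at Hcov x0 (Lls i)).
  exact (near_pNmap Hcov x0 (Lls i) e3).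
pose Us i := [set b : Pt | Npt (ls i) b /\
  forall v, verts_at (ls i) x0 v -> `|z0 (ls i) v - b v| < e / 3].
exists ((Ninf A `&` pi @^-1` interior U0) `&` [set z | Ninf A z /\ forall i, Us i (z (ls i))]).
exists (I01 `&` ball t0 (e / 3)); have [zN _ _] := Nz0; split.
- apply: Ninf_openI; first exact: (Ninf_open_pi HI Hpi (@open_interior _ U0)).
  apply: Ninf_open_basic => i; split=> //; apply: Nopen_near.
  exact (finite_verts_at Hcov x0 (Lls i)).
- by exists (ball t0 (e / 3)) => //; exact: ball_open.
- by split; [split=> // | split=> // i; split=> [|v _]; [exact: zN | rewrite subrr normr0]].
- by split=> //; exact: ballxx.
move=> [z t] [[[Nz /interior_subset U0z] [_ Uz]] [It bt]] /=; split=> //.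
apply: HW => [|i v /(supp_straight_homotopy Nz (Lls i)) [vv w]|i v Kv].
- exact: Ninf_straight_homotopy.
- by split=> //; exact: (U0z i).1.
have [zN' _ _] := Nz; rewrite /straight_homotopy /=; apply: convex_comb_dist_lt.
- exact: It0.
- by apply/andP; split; [have [] := zN' _ (Lls i) | exact: Npt_le1 (zN' _ (Lls i))].
- apply/andP; split; first exact: pNmap_ge0.
  exact: Npt_le1 (Npt_pNmap Hcov _ (Lls i)).
- by have [_ ->] := Uz i.
- exact: (U0z i).2.
- by move: bt; rewrite /= -ball_normE.
Qed.

End homotopy.

Theorem theorem2p5 (X : topologicalType) (R : realType)
  (A : set (set (set X))) (phi : set (set X) -> set X -> X -> R)
  (pi : (set (set (set X)) -> (set (set X) -> set X) -> R) -> X) :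
  topologically_complete (X := X) (R := R) ->
  (forall al, A al -> closed_lf_normal_cover al (phi al)) ->
  condI A -> condII A ->
  is_pi A pi ->
  let p := pNmap A phi in
  (* (1) pi is perfect *)
  [/\ rcont (Ninf A) (Ninf_open A) setT open pi,
      (forall C, rclosed (Ninf A) (Ninf_open A) C -> closed (pi @` C)) &
      (forall x, rcompact (Ninf_open A) (Ninf A `&` pi @^-1` [set x]))] /\
  (* (2a) *)
  (forall x, pi (p x) = x) /\
  (* (2b) *)
  (exists H : (set (set (set X)) -> (set (set X) -> set X) -> R) * R ->
              (set (set (set X)) -> (set (set X) -> set X) -> R),
     [/\ rcont (Ninf A `*` I01) (prod_open (Ninf_open A) I01_open) (Ninf A) (Ninf_open A) H,
         (forall z, Ninf A z -> H (z, 0) = z),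
         (forall z, Ninf A z -> H (z, 1) = p (pi z)) &
         (forall z t, Ninf A z -> I01 t -> pi (H (z, t)) = pi z)]) /\
  (* in particular every fibre of pi is contractible *)
  (forall x, let F := Ninf A `&` pi @^-1` [set x] in
     exists G : (set (set (set X)) -> (set (set X) -> set X) -> R) * R ->
                (set (set (set X)) -> (set (set X) -> set X) -> R),
     exists c, [/\ F c,
       rcont (F `*` I01) (prod_open (sub_open F (Ninf_open A)) I01_open) F (sub_open F (Ninf_open A)) G,
       (forall z, F z -> G (z, 0) = z) &
       (forall z, F z -> G (z, 1) = c)]).
Proof.
move=> [[HT1 _] _] Hcov HI _ Hpi p.
have Hrc := straight_homotopy_rcont Hcov HI Hpi.
have pi_p := pi_pNmap HT1 Hcov HI Hpi.
split; first split.
- exact (pi_rcont HI Hpi).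
- exact (pi_closed HT1 Hcov HI Hpi).
- exact (pi_compact_fibre HT1 Hcov HI Hpi).
split; first exact pi_p.
split.
  exists (straight_homotopy A phi pi); split=> // [z _|z _|].
  - exact (straight_homotopy0 A phi pi z).
  - exact (straight_homotopy1 A phi pi z).
  - exact (pi_straight_homotopy HT1 Hcov HI Hpi).
move=> x F; exists (straight_homotopy A phi pi), (pNmap A phi x); split.
- by split; [exact (Ninf_pNmap Hcov x) | exact (pi_p x)].
- apply (rcont_prod_sub Hrc); first by move=> z [].
  move=> [z t] [[Nz /= pz] It]; split; first exact (Ninf_straight_homotopy Hcov Hpi Nz It).
  by rewrite /= (pi_straight_homotopy HT1 Hcov HI Hpi Nz It).
- by move=> z _; exact (straight_homotopy0 A phi pi z).
- by move=> z [_ /= pz]; rewrite (straight_homotopy1 A phi pi z) pz.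
Qed.
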